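(* If $H$ is a generalized hexagonal system, then $\zeta'(H,x)=\sum_{h}\zeta(H-h,x)$, where the sum runs over all hexagons $h$ of $H$ and $\zeta'$ denotes the derivative with respect to $x$.
   Context: A generalized hexagonal system is a subgraph of a hexagonal system (a 2-connected finite plane graph in which every interior face is a regular hexagon of side length one); its hexagons are the 6-cycles of it that bound hexagonal faces of the hexagonal lattice. A Clar cover of $H$ is a spanning subgraph each of whose components is a hexagon of $H$ or a single edge. $z(H,k)$ is the number of Clar covers of $H$ with exactly $k$ hexagon components and $\zeta(H,x)=\sum_{k\ge0}z(H,k)x^k$ (the empty graph has exactly one Clar cover, with $0$ hexagons). $H-h$ denotes the graph obtained from $H$ by deleting the vertices of $h$. *)

From HB Require Import structures.
From mathcomp Require Import all_boot all_order all_algebra.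
From mathcomp Require Import finmap.
Set Implicit Arguments. Unset Strict Implicit. Unset Printing Implicit Defensive.
Import GRing.Theory.
Local Open Scope fset_scope.

(* The hexagonal lattice is realised as the "brick wall" lattice:
   vertices are all points of Z^2; (x,y)-(x+1,y) is always an edge,
   (x,y)-(x,y+1) is an edge iff x+y is even.  Its faces are the bricks
   with lower-left corner (x,y), x+y even: 6-cycles on
   (x,y),(x+1,y),(x+2,y),(x+2,y+1),(x+1,y+1),(x,y+1). *)

Definition vert := (int * int)%type.

(* a lattice edge (x,y,b): horizontal from (x,y) if b, vertical from (x,y) else *)
Definition ledge := (int * int * bool)%type.

Definition src (e : ledge) : vert := (e.1.1, e.1.2).
Definition tgt (e : ledge) : vert :=
  if e.2 then ((e.1.1 + 1)%R, e.1.2) else (e.1.1, (e.1.2 + 1)%R).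

Definition even_pt (p : vert) : bool := ~~ odd (absz (p.1 + p.2)%R).

Definition valid_edge (e : ledge) : bool := e.2 || even_pt (src e).

Definition incident (v : vert) (e : ledge) : bool := (src e == v) || (tgt e == v).

Record graph := Graph { gV : {fset vert}; gE : {fset ledge} }.

(* H is a generalized hexagonal system: a (finite) subgraph of the hexagonal
   lattice (equivalently, of some hexagonal system). *)
Definition gen_hex_sys (G : graph) : Prop :=
  forall e, e \in gE G -> [/\ valid_edge e, src e \in gV G & tgt e \in gV G].

Definition hex_edges (p : vert) : seq ledge :=
  let: (x, y) := p in
  [:: (x, y, true); ((x + 1)%R, y, true); (x, (y + 1)%R, true);
      ((x + 1)%R, (y + 1)%R, true); (x, y, false); ((x + 2)%R, y, false)].

Definition hex_verts (p : vert) : seq vert :=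
  let: (x, y) := p in
  [:: (x, y); ((x + 1)%R, y); ((x + 2)%R, y);
      (x, (y + 1)%R); ((x + 1)%R, (y + 1)%R); ((x + 2)%R, (y + 1)%R)].

(* hexagons of G: lattice faces whose 6 boundary edges all belong to G,
   represented by their lower-left corner *)
Definition hexes (G : graph) : {fset vert} :=
  [fset p in [seq src e | e <- (gE G : seq ledge)]
     | even_pt p && all (fun e => e \in gE G) (hex_edges p)].

Definition del_hex (G : graph) (h : vert) : graph :=
  Graph [fset v in gV G | v \notin hex_verts h]
        [fset e in gE G | (src e \notin hex_verts h) && (tgt e \notin hex_verts h)].

(* For a spanning subgraph (V(G), F), F a set of edges of G: *)

(* the hexagon h of G is a connected component of (V(G),F) *)
Definition hex_comp (G : graph) (F : {fset ledge}) (h : vert) : bool :=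
  [&& h \in hexes G, all (fun e => e \in F) (hex_edges h) &
      all (fun e => has (fun v => incident v e) (hex_verts h) ==> (e \in hex_edges h))
          (F : seq ledge)].

(* the single edge e is a connected component of (V(G),F) *)
Definition edge_comp (F : {fset ledge}) (e : ledge) : bool :=
  (e \in F) &&
  all (fun e' => (incident (src e) e' || incident (tgt e) e') ==> (e' == e))
      (F : seq ledge).

(* Clar cover: spanning subgraph every component of which is a hexagon of G
   or a single edge (i.e. the component of every vertex is such) *)
Definition clar_cover (G : graph) (F : {fset ledge}) : bool :=
  (F `<=` gE G) &&
  all (fun v => has (fun h => hex_comp G F h && (v \in hex_verts h)) (hexes G : seq vert)
             || has (fun e => edge_comp F e && incident v e) (F : seq ledge))
      (gV G : seq vert).

Definition nhex (G : graph) (F : {fset ledge}) : nat :=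
  #|` [fset h in hexes G | hex_comp G F h]|.

Definition zcount (G : graph) (k : nat) : nat :=
  #|` [fset F in fpowerset (gE G) | clar_cover G F && (nhex G F == k)]|.

(* zeta(H,x) = sum_k z(H,k) x^k, written as the sum over all Clar covers F
   of x^(number of hexagon components of F) *)
Definition zeta (G : graph) : {poly int} :=
  (\sum_(F <- (fpowerset (gE G) : seq {fset ledge}) | clar_cover G F) 'X^(nhex G F))%R.

From HB Require Import structures.
From mathcomp Require Import all_boot all_order all_algebra.
From mathcomp Require Import finmap zify.
Import GRing.Theory.

(* A Clar cover with k hexagon components contributes k x^(k-1) to zeta'(H, x),
   that is, one term x^(k-1) for each of its hexagon components h.  Exchanging
   the two sums, it remains to see that for a fixed hexagon h, removing the six
   edges of h is a bijection from the Clar covers of H having h as a component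
   onto the Clar covers of H - h, and that it lowers the number of hexagon
   components by exactly one.  The only geometric input is that two distinct
   hexagon components are vertex-disjoint: if they shared a vertex u, the two
   edges of one hexagon at u would lie in the other, and two adjacent edges
   determine the lattice face containing them. *)

Ltac split_bool_hyps := repeat match goal with
 | H : is_true (_ || _) |- _ => case/orP: H => H
 | H : is_true (_ && _) |- _ => let H' := fresh H in case/andP: H => H H'
 end.

Local Open Scope ring_scope.

Lemma hex_eq_of_shared_vertex {a b c d : int} :
  even_pt (a, b) -> even_pt (c, d) ->
  (forall e, e \in hex_edges (a, b) ->
     (src e \in hex_verts (c, d)) || (tgt e \in hex_verts (c, d)) ->
     e \in hex_edges (c, d)) ->
  forall u, u \in hex_verts (a, b) -> u \in hex_verts (c, d) -> (a, b) = (c, d).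
Proof.
move=> ev_ab ev_cd closed u u_ab u_cd.
have two_edges_at_u e1 e2 : e1 \in hex_edges (a, b) -> e2 \in hex_edges (a, b) ->
    (src e1 == u) || (tgt e1 == u) -> (src e2 == u) || (tgt e2 == u) ->
    (e1 \in hex_edges (c, d) -> e2 \in hex_edges (c, d) -> (a, b) = (c, d)) ->
    (a, b) = (c, d).
  move=> e1_ab e2_ab e1_u e2_u; apply; apply: closed => //.
    by case/orP: e1_u => /eqP ->; rewrite u_cd ?orbT.
  by case/orP: e2_u => /eqP ->; rewrite u_cd ?orbT.
move: ev_ab ev_cd; rewrite /even_pt /= => ev_ab ev_cd.
case: u u_ab {u_cd closed} two_edges_at_u => p q.
rewrite !inE !xpair_eqE => u_ab two_edges_at_u.
(* for each of the six vertices, the two edges of (a, b) meeting there *)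
split_bool_hyps;
  [ apply: (two_edges_at_u (a, b, true) (a, b, false))
  | apply: (two_edges_at_u (a, b, true) (a + 1, b, true))
  | apply: (two_edges_at_u (a + 1, b, true) (a + 2, b, false))
  | apply: (two_edges_at_u (a, b + 1, true) (a, b, false))
  | apply: (two_edges_at_u (a, b + 1, true) (a + 1, b + 1, true))
  | apply: (two_edges_at_u (a + 1, b + 1, true) (a + 2, b, false)) ];
  rewrite ?inE ?eqxx ?orbT //; try (rewrite /src /tgt /= !xpair_eqE; lia);
  rewrite ?inE ?xpair_eqE /= => e1_cd e2_cd; split_bool_hyps;
  apply/eqP; rewrite xpair_eqE; lia.
Qed.

Lemma has_incident (e : ledge) (s : seq vert) :
  has (fun v => incident v e) s = (src e \in s) || (tgt e \in s).
Proof.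
apply/hasP/orP => [[v vs /orP [/eqP-> | /eqP->]] | [es | es]]; [by left | by right | |].
- by exists (src e) => //; rewrite /incident eqxx.
- by exists (tgt e) => //; rewrite /incident eqxx orbT.
Qed.

Lemma hex_edge_ends {p : vert} {e : ledge} : e \in hex_edges p ->
  (src e \in hex_verts p) && (tgt e \in hex_verts p).
Proof.
case: p => x y; rewrite !inE => e_p; split_bool_hyps; move/eqP: e_p => ->;
  rewrite /src /tgt /= ?eqxx ?orbT ?andbT //= !xpair_eqE ?eqxx ?orbT ?andbT //=; lia.
Qed.

Lemma hex_vertex_edge {p v : vert} : v \in hex_verts p ->
  exists2 e, e \in hex_edges p & (src e == v) || (tgt e == v).
Proof.
case: p => x y; rewrite !inE => v_p; split_bool_hyps; move/eqP: v_p => ->.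
- by exists (x, y, true); rewrite ?inE ?eqxx.
- by exists (x, y, true); rewrite ?inE ?eqxx ?orbT.
- by exists (x + 2, y, false); rewrite ?inE ?eqxx ?orbT.
- by exists (x, y + 1, true); rewrite ?inE ?eqxx ?orbT.
- by exists (x + 1, y + 1, true); rewrite ?inE ?eqxx ?orbT.
- by exists (x + 2, y, false); rewrite ?inE ?eqxx ?orbT.
Qed.

Local Open Scope fset_scope.

Lemma in_fset_sep (T : choiceType) (A : {fset T}) (P : pred T) (x : T) :
  (x \in [fset y in A | P y]) = (x \in A) && P x.
Proof. by rewrite inE. Qed.

Lemma in_hexes (G : graph) (p : vert) :
  (p \in hexes G) = even_pt p && all (fun e => e \in gE G) (hex_edges p).
Proof.
rewrite /hexes !inE /=.
case hex_p: (even_pt p && all (fun e => e \in gE G) (hex_edges p));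
  rewrite ?andbF ?andbT //.
case/andP: hex_p => _; case: p => x y /= /andP [xy_G _].
by apply/mapP; exists (x, y, true).
Qed.

Lemma hex_compP (G : graph) (F : {fset ledge}) (p : vert) :
  reflect [/\ p \in hexes G, {subset hex_edges p <= F} &
     forall e, e \in F -> (src e \in hex_verts p) || (tgt e \in hex_verts p) ->
       e \in hex_edges p]
  (hex_comp G F p).
Proof.
apply: (iffP and3P) => [[p_G /allP p_F /allP closed] | [p_G p_F closed]].
  by split=> // e e_F; move: (closed e e_F); rewrite /= has_incident => /implyP.
split=> //; first exact/allP.
by apply/allP => e e_F; rewrite /= has_incident; apply/implyP/closed.
Qed.

Lemma edge_compP (F : {fset ledge}) (e : ledge) :
  reflect (e \in F /\ forall e', e' \in F ->
             incident (src e) e' || incident (tgt e) e' -> e' = e)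
  (edge_comp F e).
Proof.
apply: (iffP andP) => [[e_F /allP isolated] | [e_F isolated]]; split=> //.
  by move=> e' e'_F /(implyP (isolated e' e'_F))/eqP.
by apply/allP => e' e'_F; apply/implyP => /(isolated e' e'_F)->.
Qed.

Lemma clar_coverP (G : graph) (F : {fset ledge}) :
  reflect (F `<=` gE G /\ forall v, v \in gV G ->
     (exists2 p, p \in hexes G & hex_comp G F p && (v \in hex_verts p)) \/
     (exists2 e, e \in F & edge_comp F e && incident v e))
  (clar_cover G F).
Proof.
apply: (iffP andP) => [[F_G /allP covered] | [F_G covered]]; split=> //.
  by move=> v v_G; case/orP: (covered v v_G) => /hasP; [left | right].
by apply/allP => v v_G; apply/orP; case: (covered v v_G) => /hasP; [left | right].
Qed.

Lemma hex_comp_hexes {G : graph} {F : {fset ledge}} {p : vert} :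
  hex_comp G F p -> p \in hexes G.
Proof. by case/and3P. Qed.

Lemma in_del_hex_edges (G : graph) (h : vert) (e : ledge) :
  (e \in gE (del_hex G h)) =
  [&& e \in gE G, src e \notin hex_verts h & tgt e \notin hex_verts h].
Proof. by rewrite !inE /=; case: (e \in gE G); rewrite ?andbT ?andbF. Qed.

Lemma in_del_hex_verts (G : graph) (h v : vert) :
  (v \in gV (del_hex G h)) = (v \in gV G) && (v \notin hex_verts h).
Proof. by rewrite !inE /= andbC. Qed.

Lemma hexes_del_hex {G : graph} {h p : vert} : p \in hexes (del_hex G h) ->
  p \in hexes G /\ {in hex_verts p, forall v, v \notin hex_verts h}.
Proof.
rewrite !in_hexes => /andP [ev_p /allP p_G']; split.
  by rewrite ev_p; apply/allP => e /p_G'; rewrite in_del_hex_edges => /and3P [].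
move=> v /hex_vertex_edge [e e_p /orP [] /eqP<-];
  by have:= p_G' e e_p; rewrite in_del_hex_edges => /and3P [].
Qed.

Lemma hex_not_in_del_hex (G : graph) (h : vert) : h \notin hexes (del_hex G h).
Proof.
apply/negP => /hexes_del_hex [_]; case: h => x y /(_ (x, y)).
by rewrite !inE eqxx => /(_ isT).
Qed.

Lemma hex_comp_disjoint {G : graph} {F : {fset ledge}} {h p : vert} :
  hex_comp G F h -> hex_comp G F p -> p != h ->
  {in hex_verts p, forall v, v \notin hex_verts h}.
Proof.
move=> /hex_compP [h_G h_F _] /hex_compP [p_G _ p_closed] p_neq_h v v_p.
apply: contra p_neq_h => v_h; apply/eqP/esym.
move: h_G p_G h_F v_p v_h; case: h => a b; case: p p_closed => c d p_closed.
rewrite !in_hexes => /andP [ev_ab _] /andP [ev_cd _] h_F v_p v_h.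
apply: (hex_eq_of_shared_vertex ev_ab ev_cd _ _ v_h v_p) => e e_ab.
exact/p_closed/h_F.
Qed.

Definition hex_fset (h : vert) : {fset ledge} := seq_fset tt (hex_edges h).

Lemma in_hex_fset (h : vert) (e : ledge) : (e \in hex_fset h) = (e \in hex_edges h).
Proof. exact: seq_fsetE. Qed.

Section DeleteHexagon.

Variables (G : graph) (h : vert).

Lemma hex_comp_del_hex {F : {fset ledge}} {p : vert} :
  hex_comp G F h -> hex_comp G F p -> p != h ->
  hex_comp (del_hex G h) (F `\` hex_fset h) p.
Proof.
move=> h_comp p_comp p_neq_h.
have p_off_h := hex_comp_disjoint h_comp p_comp p_neq_h.
have p_edge_off_h e : e \in hex_edges p ->
    (src e \notin hex_verts h) && (tgt e \notin hex_verts h).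
  by move/hex_edge_ends/andP => [src_p tgt_p]; rewrite !p_off_h.
case/hex_compP: p_comp => p_G p_F p_closed; apply/hex_compP; split.
- move: p_G; rewrite !in_hexes => /andP [-> /allP p_G] /=.
  by apply/allP => e e_p; rewrite in_del_hex_edges p_G //= p_edge_off_h.
- move=> e e_p; rewrite in_fsetD in_hex_fset p_F // andbT.
  by apply: contraTN (p_edge_off_h e e_p) => /hex_edge_ends/andP [->].
- by move=> e /[!in_fsetD] /andP [_ e_F]; apply: p_closed.
Qed.

Lemma hex_comp_add_hex {F : {fset ledge}} {p : vert} :
  hex_comp (del_hex G h) F p -> hex_comp G (F `|` hex_fset h) p.
Proof.
case/hex_compP => /hexes_del_hex [p_G p_off_h] p_F p_closed.
apply/hex_compP; split=> // [e /p_F | e]; first by rewrite in_fsetU => ->.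
rewrite in_fsetU in_hex_fset => /orP [e_F | /hex_edge_ends/andP [src_h tgt_h]].
  exact: p_closed.
by case/orP => /p_off_h; rewrite ?src_h ?tgt_h.
Qed.

Hypothesis h_G : h \in hexes G.

Lemma hex_comp_added {F : {fset ledge}} :
  F `<=` gE (del_hex G h) -> hex_comp G (F `|` hex_fset h) h.
Proof.
move=> F_G'; apply/hex_compP; split=> // e.
  by rewrite in_fsetU in_hex_fset => ->; rewrite orbT.
rewrite in_fsetU in_hex_fset => /orP [e_F | //].
have:= fsubsetP F_G' e e_F; rewrite in_del_hex_edges => /and3P [_ src_off tgt_off].
by case/orP => e_h; [rewrite e_h in src_off | rewrite e_h in tgt_off].
Qed.

Lemma add_hex_sub {F : {fset ledge}} :
  F `<=` gE (del_hex G h) -> F `|` hex_fset h `<=` gE G.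
Proof.
move=> F_G'; apply/fsubsetP => e; rewrite in_fsetU in_hex_fset => /orP [e_F | e_h].
  by have:= fsubsetP F_G' e e_F; rewrite in_del_hex_edges => /and3P [].
by move: h_G; rewrite in_hexes => /andP [_ /allP]; apply.
Qed.

Lemma add_hexK {F : {fset ledge}} :
  F `<=` gE (del_hex G h) -> (F `|` hex_fset h) `\` hex_fset h = F.
Proof.
move=> F_G'; apply/fsetP => e; rewrite in_fsetD in_fsetU in_hex_fset.
case e_h: (e \in hex_edges h); rewrite /= ?orbF //; apply/esym/negP => e_F.
have:= fsubsetP F_G' e e_F; rewrite in_del_hex_edges.
by case/andP: (hex_edge_ends e_h) => src_h _; rewrite src_h andbF.
Qed.

Lemma del_hexK {F : {fset ledge}} :
  hex_comp G F h -> (F `\` hex_fset h) `|` hex_fset h = F.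
Proof.
case/hex_compP => _ h_F _; apply/fsetP => e; rewrite in_fsetU in_fsetD in_hex_fset.
by case e_h: (e \in hex_edges h); rewrite /= ?orbT ?orbF // h_F.
Qed.

Lemma clar_cover_add_hex {F : {fset ledge}} :
  clar_cover (del_hex G h) F -> clar_cover G (F `|` hex_fset h).
Proof.
case/clar_coverP => F_G' covered; apply/clar_coverP; split; first exact: add_hex_sub.
move=> v v_G; case v_h: (v \in hex_verts h).
  by left; exists h => //; rewrite hex_comp_added.
have v_G' : v \in gV (del_hex G h) by rewrite in_del_hex_verts v_G v_h.
case: (covered v v_G') => [[p p_G' /andP [p_comp v_p]] | [e e_F /andP [e_comp v_e]]].
  left; exists p; first by case: (hexes_del_hex p_G').
  by rewrite hex_comp_add_hex.
right; exists e; first by rewrite in_fsetU e_F.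
rewrite v_e andbT; apply/edge_compP; split; first by rewrite in_fsetU e_F.
move=> e'; rewrite in_fsetU in_hex_fset => /orP [e'_F | e'_h].
  by case/edge_compP: e_comp => _; apply.
have [src'_h tgt'_h] := andP (hex_edge_ends e'_h).
have:= fsubsetP F_G' e e_F; rewrite in_del_hex_edges => /and3P [_ src_off tgt_off].
by case/orP => /orP [] /eqP e_e'; rewrite -e_e' ?src'_h ?tgt'_h in src_off tgt_off.
Qed.

Lemma clar_cover_del_hex {F : {fset ledge}} :
  clar_cover G F -> hex_comp G F h -> clar_cover (del_hex G h) (F `\` hex_fset h).
Proof.
case/clar_coverP => F_G covered h_comp.
have [_ _ h_closed] := hex_compP _ _ _ h_comp.
apply/clar_coverP; split.
  apply/fsubsetP => e; rewrite in_fsetD in_hex_fset => /andP [e_off_h e_F].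
  rewrite in_del_hex_edges (fsubsetP F_G e e_F) /=.
  by apply/andP; split; apply: contra e_off_h => e_h;
    apply: h_closed; rewrite ?e_h ?orbT.
move=> v; rewrite in_del_hex_verts => /andP [v_G v_off_h].
case: (covered v v_G) => [[p p_G /andP [p_comp v_p]] | [e e_F /andP [e_comp v_e]]].
  have p_neq_h : p != h by apply: contraNneq v_off_h => <-.
  have p_comp' := hex_comp_del_hex h_comp p_comp p_neq_h.
  by left; exists p; [exact: hex_comp_hexes p_comp' | rewrite p_comp' v_p].
have e_off_h : e \notin hex_edges h.
  apply: contra v_off_h => /hex_edge_ends/andP [src_h tgt_h].
  by case/orP: v_e => /eqP <-.
right; exists e; first by rewrite in_fsetD in_hex_fset e_off_h.
rewrite v_e andbT; apply/edge_compP; split.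
  by rewrite in_fsetD in_hex_fset e_off_h.
by move=> e' /[!in_fsetD] /andP [_ e'_F]; case/edge_compP: e_comp => _; apply.
Qed.

Lemma nhex_add_hex {F : {fset ledge}} :
  F `<=` gE (del_hex G h) -> nhex G (F `|` hex_fset h) = (nhex (del_hex G h) F).+1.
Proof.
move=> F_G'; rewrite /nhex.
have -> : [fset p in hexes G | hex_comp G (F `|` hex_fset h) p] =
          h |` [fset p in hexes (del_hex G h) | hex_comp (del_hex G h) F p].
  apply/fsetP => p; rewrite in_fset1U !in_fset_sep.
  have [-> | p_neq_h] /= := eqVneq p h; first by rewrite h_G hex_comp_added.
  apply/andP/andP => [[_ p_comp] | [p_G' p_comp]]; last first.
    by split; [case: (hexes_del_hex p_G') | exact: hex_comp_add_hex].
  have := hex_comp_del_hex (hex_comp_added F_G') p_comp p_neq_h.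
  by rewrite (add_hexK F_G') => p_comp'; rewrite (hex_comp_hexes p_comp').
by rewrite cardfsU1 in_fset_sep (negbTE (hex_not_in_del_hex G h)).
Qed.

Lemma sum_clar_covers_with_hex :
  \sum_(F <- fpowerset (gE G) | clar_cover G F && hex_comp G F h)
     'X^((nhex G F).-1) = zeta (del_hex G h).
Proof.
rewrite /zeta -big_filter -[in RHS]big_filter.
rewrite [in RHS](eq_big_seq (fun F => 'X^((nhex G (F `|` hex_fset h)).-1))); last first.
  move=> F; rewrite mem_filter => /andP [/clar_coverP [F_G' _] _].
  by rewrite nhex_add_hex.
rewrite -(big_map (fun F => F `|` hex_fset h) xpredT (fun F => 'X^((nhex G F).-1))).
apply/perm_big/uniq_perm; first exact/filter_uniq/fset_uniq.
  rewrite map_inj_in_uniq; first exact/filter_uniq/fset_uniq.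
  move=> F1 F2; rewrite !mem_filter.
  move=> /andP [/clar_coverP [F1_G' _] _] /andP [/clar_coverP [F2_G' _] _] eqF.
  by rewrite -(add_hexK F1_G') eqF add_hexK.
move=> F; rewrite mem_filter.
apply/andP/mapP => [[/andP [F_cover h_comp] _] | [F' F'_cover ->]].
  have F'_cover := clar_cover_del_hex F_cover h_comp.
  exists (F `\` hex_fset h).
    by rewrite mem_filter F'_cover fpowersetE; case/clar_coverP: F'_cover.
  by rewrite del_hexK.
move: F'_cover; rewrite mem_filter => /andP [F'_cover _].
have [F'_G' _] := clar_coverP _ _ F'_cover.
by rewrite clar_cover_add_hex // hex_comp_added // fpowersetE add_hex_sub.
Qed.

End DeleteHexagon.

Lemma nhex_count (G : graph) (F : {fset ledge}) :
  nhex G F = count (hex_comp G F) (hexes G).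
Proof. by rewrite /nhex card_fset_sum1 -big_fset_condE sum1_count. Qed.

Lemma deriv_Xn_nhex (G : graph) (F : {fset ledge}) :
  deriv ('X^(nhex G F) : {poly int}) =
  \sum_(p <- hexes G | hex_comp G F p) 'X^((nhex G F).-1).
Proof. by rewrite derivXn big_const_seq iter_addr_0 nhex_count. Qed.

Theorem theorem4 (H : graph) :
  gen_hex_sys H ->
  deriv (zeta H) = (\sum_(h <- (hexes H : seq vert)) zeta (del_hex H h))%R.
Proof.
move=> _; rewrite /zeta raddf_sum.
under eq_bigr => F _ do rewrite /= deriv_Xn_nhex big_mkcond.
rewrite exchange_big; apply: eq_big_seq => h h_H.
by rewrite -big_mkcondr sum_clar_covers_with_hex.
Qed.
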